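(* Let $G_1$ and $G_2$ be two vertex-disjoint simple connected graphs with $|V(G_1)|=n_1$, $|V(G_2)|=n_2$, $|E(G_1)|=m_1$, $|E(G_2)|=m_2$. Then the vertex S-join $G_1\dot{\vee}_S G_2$ satisfies \[ F(G_1\dot{\vee}_S G_2)=F(G_1)+F(G_2)+3n_2M_1(G_1)+3n_1M_1(G_2)+6m_1n_2^{2}+6m_2n_1^{2}+n_1n_2(n_1^2+n_2^2)+8m_1 . \]
   Context: For a simple graph $G$ and $v\in V(G)$, $d_G(v)$ is the degree of $v$. The first Zagreb index is $M_1(G)=\sum_{v\in V(G)}d_G(v)^2$ and the F-index (forgotten topological index) is $F(G)=\sum_{v\in V(G)}d_G(v)^3$. The subdivision graph $S(G)$ is obtained from $G$ by inserting a new vertex into each edge of $G$ (replacing each edge by a path of length 2); let $I(G)$ denote the set of these inserted vertices, so $V(S(G))=V(G)\cup I(G)$. The vertex S-join $G_1\dot{\vee}_S G_2$ is the graph obtained from $S(G_1)$ and $G_2$ (taken vertex-disjoint) by joining each vertex of $V(G_1)$ to every vertex of $G_2$ by an edge. *)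

From mathcomp Require Import all_boot.
Set Implicit Arguments. Unset Strict Implicit. Unset Printing Implicit Defensive.

Section Graphs.
Variable T : finType.

Definition simple_graph (e : rel T) : Prop := symmetric e /\ irreflexive e.
Definition connected_graph (e : rel T) : Prop := forall x y : T, connect e x y.

Definition deg (e : rel T) (v : T) : nat := #|[set w | e v w]|.
Definition M1 (e : rel T) : nat := \sum_(v : T) deg e v ^ 2.
Definition Findex (e : rel T) : nat := \sum_(v : T) deg e v ^ 3.

Definition is_edge (e : rel T) (s : {set T}) : bool :=
  [exists x, exists y, e x y && (s == [set x; y])].
Definition edge_type (e : rel T) := {s : {set T} | is_edge e s}.
Definition nedges (e : rel T) : nat := #|[set s : {set T} | is_edge e s]|.
End Graphs.

(* Vertex type of the vertex S-join: V(G1) + I(G1) + V(G2), where I(G1)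
   has one inserted vertex per edge of G1 (the edge itself). *)
Definition SjoinV (V1 V2 : finType) (e1 : rel V1) : finType :=
  ((V1 + edge_type e1) + V2)%type.

Definition Sjoin_adj (V1 V2 : finType) (e1 : rel V1) (e2 : rel V2)
  (a b : SjoinV V2 e1) : bool :=
  match a, b with
  | inl (inl x), inl (inr s) => x \in val s       (* subdivision edges *)
  | inl (inr s), inl (inl x) => x \in val s
  | inl (inl x), inr _ => true
  | inr _, inl (inl x) => true
  | inr y, inr y' => e2 y y'
  | _, _ => false
  end.

Arguments Sjoin_adj {V1 V2} e1 e2 a b.

(** Every vertex of [V(G1)] gains the [n2] vertices of [G2] as neighbours,
    every vertex of [G2] gains the [n1] vertices of [G1], and every inserted
    vertex has degree 2. Expanding [(d + n)^3] and using the handshake lemma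
    [sum d = 2m] for [G1] and [G2] gives the formula; the [m1] inserted
    vertices contribute [8 m1]. *)

From mathcomp Require Import all_boot.
From mathcomp Require Import ring.

Lemma set2_inj (T : finType) (x : T) : injective (fun y => [set x; y]).
Proof.
move=> y y' /= eq_set.
have : y \in [set x; y'] by rewrite -eq_set !inE eqxx orbT.
have : y' \in [set x; y] by rewrite eq_set !inE eqxx orbT.
by rewrite !inE => /orP[/eqP|/eqP ->] // -> /orP[/eqP|/eqP].
Qed.

Lemma sum_cube_addn (T : finType) (d : T -> nat) n :
  \sum_x (d x + n) ^ 3 = \sum_x d x ^ 3 + 3 * n * \sum_x d x ^ 2
     + 3 * n ^ 2 * \sum_x d x + #|T| * n ^ 3.
Proof.
rewrite !big_distrr /= -sum_nat_const -!big_split /=.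
by apply: eq_bigr => x _; ring.
Qed.

Section SimpleGraph.
Variables (T : finType) (e : rel T).
Hypothesis sg : simple_graph e.

Lemma deg_sum v : deg e v = \sum_w (e v w : nat).
Proof.
rewrite /deg -sum1_card big_mkcond /=; apply: eq_bigr => w _.
by rewrite inE; case: (e v w).
Qed.

Lemma card_edge s : is_edge e s -> #|s| = 2.
Proof.
case: sg => _ irr /existsP[a /existsP[b /andP[eab /eqP ->]]].
by rewrite cards2; case: eqP => // ab; rewrite ab irr in eab.
Qed.

Lemma edges_at_neighbours x :
  [set s : {set T} | is_edge e s && (x \in s)] =
  (fun y => [set x; y]) @: [set y | e x y].
Proof.
case: sg => sym _; apply/setP => s; rewrite !inE; apply/idP/idP.
- case/andP => /existsP[a /existsP[b /andP[eab /eqP ->]]].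
  rewrite !inE => /orP[/eqP xa|/eqP xb]; subst x.
    by apply/imsetP; exists b; rewrite ?inE.
  apply/imsetP; exists a; first by rewrite inE sym.
  by apply/setP => z; rewrite !inE orbC.
- case/imsetP => y; rewrite inE => exy ->.
  rewrite !inE eqxx andbT; apply/existsP; exists x; apply/existsP; exists y.
  by rewrite exy eqxx.
Qed.

Lemma sum_edges_at x : \sum_(s | is_edge e s) (x \in s : nat) = deg e x.
Proof.
rewrite /deg -(card_imset _ (@set2_inj T x)) -edges_at_neighbours -sum1_card.
rewrite [RHS](eq_bigl (fun s => is_edge e s && (x \in s))) => [|s]; last by rewrite inE.
by rewrite big_mkcondr; apply: eq_bigr => s _; case: (x \in s).
Qed.

Lemma handshake : \sum_x deg e x = 2 * nedges e.
Proof.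
under eq_bigr do rewrite -sum_edges_at.
rewrite exchange_big /= /nedges -sum1_card big_distrr /=.
rewrite [RHS](eq_bigl (is_edge e)) => [|s]; last by rewrite inE.
apply: eq_bigr => s /card_edge <-.
by rewrite muln1 -sum1_card [RHS]big_mkcond.
Qed.

End SimpleGraph.

Section SJoin.
Variables (V1 V2 : finType) (e1 : rel V1) (e2 : rel V2).
Hypothesis sg1 : simple_graph e1.

Local Notation join := (Sjoin_adj e1 e2).

Lemma deg_Sjoin_vertex1 x : deg join (inl (inl x)) = deg e1 x + #|V2|.
Proof.
rewrite deg_sum !big_sumType /= big1 // add0n sum_nat_const muln1.
by rewrite -sum_edges_at // (big_sub (is_edge e1)).
Qed.

Lemma deg_Sjoin_inserted (s : edge_type e1) : deg join (inl (inr s)) = 2.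
Proof.
rewrite deg_sum !big_sumType /= [X in _ + X + _]big1 // [X in _ + X]big1 //.
rewrite !addn0 -(@card_edge _ _ sg1 _ (valP s)) -sum1_card [RHS]big_mkcond /=.
by apply: eq_bigr => x _; case: (x \in val s).
Qed.

Lemma deg_Sjoin_vertex2 y : deg join (inr y) = deg e2 y + #|V1|.
Proof.
rewrite deg_sum !big_sumType /= [X in _ + X + _]big1 // addn0.
by rewrite sum_nat_const muln1 addnC deg_sum.
Qed.

Lemma card_edge_type : #|{: edge_type e1}| = nedges e1.
Proof. by rewrite card_sig /nedges cardsE. Qed.

Lemma Findex_Sjoin :
  Findex join = \sum_x (deg e1 x + #|V2|) ^ 3 + 8 * nedges e1
                + \sum_y (deg e2 y + #|V1|) ^ 3.
Proof.
rewrite /Findex !big_sumType /=.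
under eq_bigr do rewrite deg_Sjoin_vertex1.
under [X in _ + X + _]eq_bigr do rewrite deg_Sjoin_inserted.
under [X in _ + X]eq_bigr do rewrite deg_Sjoin_vertex2.
by rewrite sum_nat_const card_edge_type mulnC.
Qed.

End SJoin.

Theorem theorem1 (V1 V2 : finType) (e1 : rel V1) (e2 : rel V2) :
  simple_graph e1 -> simple_graph e2 ->
  connected_graph e1 -> connected_graph e2 ->
  let n1 := #|V1| in let n2 := #|V2| in
  let m1 := nedges e1 in let m2 := nedges e2 in
  Findex (Sjoin_adj e1 e2) =
    Findex e1 + Findex e2 + 3 * n2 * M1 e1 + 3 * n1 * M1 e2
    + 6 * m1 * n2 ^ 2 + 6 * m2 * n1 ^ 2 + n1 * n2 * (n1 ^ 2 + n2 ^ 2) + 8 * m1.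
Proof.
move=> sg1 sg2 _ _ n1 n2 m1 m2.
rewrite Findex_Sjoin // !sum_cube_addn !handshake // /M1 /Findex.
rewrite -/n1 -/n2 -/m1 -/m2; ring.
Qed.
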